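(* Let $\|\cdot\|_{(i)}$, $i\in[k]$, be norms on a finite-dimensional real inner product space $V$ with dual norms $\|\cdot\|^\circ_{(i)}$, let $0\neq x_0\in V$, $\mu_i^\ast=1/\|x_0\|_{(i)}$ and $\|x\|_{\max,\mu^\ast}=\max_i\mu^\ast_i\|x\|_{(i)}$ (so $\|x_0\|_{\max,\mu^\ast}=1$). Then for every $g\in V$, $$\inf_{y\in\mathrm{cone}\,\partial\|\cdot\|_{\max,\mu^\ast}(x_0)}\|g-y\|_2=\inf_{y\in\sum_{i=1}^k\mathrm{cone}\,\partial\|\cdot\|_{(i)}(x_0)}\|g-y\|_2$$ and this equals $$\inf\Big\{\Big\|g-\sum_{i=1}^k x_i\Big\|_2:\ \tau_i\ge0,\ x_i\in V,\ \langle x_i,x_0\rangle=\tau_i\|x_0\|_{\max,\mu^\ast},\ \|x_i\|^\circ_{(i)}\le\tau_i\mu^\ast_i\ \forall i\Big\}.$$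
   Context: $\partial$ denotes the subdifferential; $\mathrm{cone}(S)=\{\tau x:x\in S,\tau>0\}$; sums of sets are Minkowski sums; the dual norm of $\|\cdot\|$ is $\|y\|^\circ=\sup_{\|x\|=1}|\langle x,y\rangle|$. *)

From Stdlib Require Import Reals Lra ClassicalEpsilon.
Open Scope R_scope.

Fixpoint gsum {A : Type} (zero : A) (add : A -> A -> A) (f : nat -> A) (n : nat) : A :=
  match n with
  | O => zero
  | S m => add (gsum zero add f m) (f m)
  end.

Record IPS := {
  car :> Type;
  vzero : car;
  vadd : car -> car -> car;
  vscal : R -> car -> car;
  inner : car -> car -> R;
  vadd_assoc : forall x y z, vadd x (vadd y z) = vadd (vadd x y) z;
  vadd_comm : forall x y, vadd x y = vadd y x;
  vadd_0 : forall x, vadd x vzero = x;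
  vadd_opp : forall x, vadd x (vscal (-1) x) = vzero;
  vscal_1 : forall x, vscal 1 x = x;
  vscal_assoc : forall a b x, vscal a (vscal b x) = vscal (a * b) x;
  vscal_distr_v : forall a x y, vscal a (vadd x y) = vadd (vscal a x) (vscal a y);
  vscal_distr_s : forall a b x, vscal (a + b) x = vadd (vscal a x) (vscal b x);
  inner_sym : forall x y, inner x y = inner y x;
  inner_add_l : forall x y z, inner (vadd x y) z = inner x z + inner y z;
  inner_scal_l : forall a x y, inner (vscal a x) y = a * inner x y;
  inner_pos : forall x, 0 <= inner x x;
  inner_def : forall x, inner x x = 0 -> x = vzero;
  fin_dim : exists (n : nat) (e : nat -> car), forall v, exists c : nat -> R,
      v = gsum vzero vadd (fun i => vscal (c i) (e i)) n
}.

Arguments vzero {_}. Arguments vadd {_}. Arguments vscal {_}. Arguments inner {_}.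

Definition vsub {V : IPS} (x y : V) : V := vadd x (vscal (-1) y).
Definition vsum {V : IPS} (f : nat -> V) (k : nat) : V := gsum vzero vadd f k.

Definition norm2 {V : IPS} (v : V) : R := sqrt (inner v v).

Definition is_norm {V : IPS} (N : V -> R) : Prop :=
  (forall x, 0 <= N x) /\
  (forall x, N x = 0 -> x = vzero) /\
  (forall a x, N (vscal a x) = Rabs a * N x) /\
  (forall x y, N (vadd x y) <= N x + N y).

(* supremum / infimum of a set of reals (meaningful when nonempty and bounded) *)
Definition Rsup (E : R -> Prop) : R :=
  match excluded_middle_informative (bound E /\ exists x, E x) with
  | left H => proj1_sig (completeness E (proj1 H) (proj2 H))
  | right _ => 0
  end.
Definition Rinf (E : R -> Prop) : R := - Rsup (fun r => E (- r)).

Definition dual_norm {V : IPS} (N : V -> R) (y : V) : R :=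
  Rsup (fun r => exists x, N x = 1 /\ r = Rabs (inner x y)).

Definition subdiff {V : IPS} (f : V -> R) (x0 : V) (g : V) : Prop :=
  forall y, f y >= f x0 + inner g (vsub y x0).

Definition cone {V : IPS} (S : V -> Prop) (y : V) : Prop :=
  exists tau x, 0 < tau /\ S x /\ y = vscal tau x.

Fixpoint rmax_upto (f : nat -> R) (n : nat) : R :=
  match n with
  | O => f O
  | S m => Rmax (rmax_upto f m) (f n)
  end.

(* weighted max norm  ||x||_{max,mu} = max_{i < k} mu_i ||x||_(i)   (k >= 1) *)
Definition max_norm {V : IPS} (k : nat) (mu : nat -> R) (N : nat -> V -> R) (x : V) : R :=
  rmax_upto (fun i => mu i * N i x) (k - 1).

From Stdlib Require Import Reals Lra Lia ClassicalEpsilon FunctionalExtensionality Classical List.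
Open Scope R_scope.

(* With [mu_i = 1 / N_i x0] every weighted norm [mu_i N_i] is active at [x0] and
   [Nmax x0 = 1], where [Nmax = max_i mu_i N_i].  Call E1, E2, E3 the three sets of distances
   [||g - y||_2] appearing in the theorem: [y] ranges over [cone ∂Nmax(x0)], over
   [sum_i cone ∂N_i(x0)], and over the dual parametrisation.  We prove E2 ⊆ E1 ⊆ E3 and that
   [inf E2] bounds E3 from below, so the three infima coincide ([Rinf_sandwich]):
   - E2 ⊆ E1: a sum of scaled subgradients of the [N_i] is a scaled subgradient of [Nmax];
   - E1 ⊆ E3: a subgradient of [Nmax] at [x0] splits into scaled subgradients of the [N_i]
     (Hahn–Banach on [V^k] for [<g, .>] on the diagonal, dominated by [z |-> max_i mu_i N_i z_i],
     followed by the Riesz representation of the components);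
   - E3 ≥ inf E2: the dual constraints say exactly that [x_i] is a [tau_i mu_i]-scaled
     subgradient of [N_i]; adding [dl h_i], with [h_i] a subgradient of [N_i] at [x0], puts every
     term in the open cone and moves the sum by an arbitrarily small amount.
   The dual-norm constraint can only be exploited because linear functionals are bounded for any
   norm in finite dimension; this is proved from an orthonormal basis (Gram–Schmidt) by showing
   that finite spans are closed. *)

Lemma inner_add_r {V : IPS} (x y z : V) : inner x (vadd y z) = inner x y + inner x z.
Proof. rewrite inner_sym, inner_add_l, (inner_sym _ y), (inner_sym _ z); ring. Qed.

Lemma inner_scal_r {V : IPS} a (x y : V) : inner x (vscal a y) = a * inner x y.
Proof. rewrite inner_sym, inner_scal_l, inner_sym; ring. Qed.

Lemma inner_zero_l {V : IPS} (y : V) : inner vzero y = 0.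
Proof. pose proof (inner_add_l V vzero vzero y) as H. rewrite vadd_0 in H. lra. Qed.

Lemma inner_zero_r {V : IPS} (y : V) : inner y vzero = 0.
Proof. rewrite inner_sym; apply inner_zero_l. Qed.

(* Two vectors are equal as soon as the squared norm of their difference vanishes;
   together with bilinearity this reduces vector identities to ring identities. *)
Lemma eq_of_inner {V : IPS} (x y : V) : inner (vsub x y) (vsub x y) = 0 -> x = y.
Proof.
  intro H. apply inner_def in H. unfold vsub in H.
  assert (E : vadd (vadd x (vscal (-1) y)) y = x).
  { rewrite <- vadd_assoc, (vadd_comm _ (vscal (-1) y)), vadd_opp, vadd_0. reflexivity. }
  rewrite H, vadd_comm, vadd_0 in E. symmetry; exact E.
Qed.

Ltac vexpand := unfold vsub in *;
  repeat rewrite ?inner_add_l, ?inner_add_r, ?inner_scal_l, ?inner_scal_r,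
     ?inner_zero_l, ?inner_zero_r in *.
Ltac veq := apply eq_of_inner; vexpand; (ring || (field; auto)).

Definition rsum (f : nat -> R) (n : nat) : R := gsum 0 Rplus f n.

Lemma rsum_S f n : rsum f (S n) = rsum f n + f n.
Proof. reflexivity. Qed.

Lemma vsum_S {V : IPS} (f : nat -> V) n : vsum f (S n) = vadd (vsum f n) (f n).
Proof. reflexivity. Qed.

Lemma rsum_1 f : rsum f 1 = f O.
Proof. unfold rsum; simpl; ring. Qed.

Lemma rsum_ext f g n : (forall i, (i < n)%nat -> f i = g i) -> rsum f n = rsum g n.
Proof. induction n; intros H; [reflexivity|]. rewrite !rsum_S, IHn, H; auto. Qed.

Lemma vsum_ext {V : IPS} (f g : nat -> V) n :
  (forall i, (i < n)%nat -> f i = g i) -> vsum f n = vsum g n.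
Proof. induction n; intros H; [reflexivity|]. rewrite !vsum_S, IHn, H; auto. Qed.

Lemma rsum_le f g n : (forall i, (i < n)%nat -> f i <= g i) -> rsum f n <= rsum g n.
Proof.
  induction n; intros H; [unfold rsum; simpl; lra|].
  rewrite !rsum_S. apply Rplus_le_compat; auto.
Qed.

Lemma rsum_plus f g n : rsum (fun i => f i + g i) n = rsum f n + rsum g n.
Proof. induction n; [unfold rsum; simpl; ring|]. rewrite !rsum_S, IHn; ring. Qed.

Lemma rsum_scal a f n : rsum (fun i => a * f i) n = a * rsum f n.
Proof. induction n; [unfold rsum; simpl; ring|]. rewrite !rsum_S, IHn; ring. Qed.

Lemma rsum_0 n : rsum (fun _ => 0) n = 0.
Proof. induction n; [reflexivity|]. rewrite rsum_S, IHn; ring. Qed.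

Lemma rsum_nonneg f n : (forall i, (i < n)%nat -> 0 <= f i) -> 0 <= rsum f n.
Proof. intros H. rewrite <- (rsum_0 n). apply rsum_le; auto. Qed.

Lemma rsum_pos f n : (0 < n)%nat -> (forall i, (i < n)%nat -> 0 < f i) -> 0 < rsum f n.
Proof.
  intros Hn H. destruct n; [lia|]. rewrite rsum_S.
  pose proof (rsum_nonneg f n (fun i Hi => Rlt_le _ _ (H i ltac:(lia)))). pose proof (H n ltac:(lia)). lra.
Qed.

Lemma Rabs_rsum f n : Rabs (rsum f n) <= rsum (fun i => Rabs (f i)) n.
Proof.
  induction n; [unfold rsum; simpl; rewrite Rabs_R0; lra|].
  rewrite !rsum_S. eapply Rle_trans; [apply Rabs_triang | lra].
Qed.

Lemma rsum_single (f : nat -> R) n j : (j < n)%nat ->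
  (forall i, (i < n)%nat -> i <> j -> f i = 0) -> rsum f n = f j.
Proof.
  induction n; intros Hj H; [lia|]. rewrite rsum_S.
  destruct (Nat.eq_dec j n) as [->|Hne].
  - rewrite (rsum_ext _ (fun _ => 0)), rsum_0; [ring|]. intros i Hi; apply H; lia.
  - rewrite IHn, (H n); [ring|lia|lia|lia|]. intros i Hi; apply H; lia.
Qed.

Lemma inner_vsum_l {V : IPS} (f : nat -> V) n y :
  inner (vsum f n) y = rsum (fun i => inner (f i) y) n.
Proof. induction n; [apply inner_zero_l|]. rewrite vsum_S, rsum_S, inner_add_l, IHn; reflexivity. Qed.

Lemma inner_vsum_r {V : IPS} (f : nat -> V) n y :
  inner y (vsum f n) = rsum (fun i => inner y (f i)) n.
Proof. rewrite inner_sym, inner_vsum_l. apply rsum_ext; intros; apply inner_sym. Qed.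

Lemma vsum_add {V : IPS} (f g : nat -> V) n :
  vsum (fun i => vadd (f i) (g i)) n = vadd (vsum f n) (vsum g n).
Proof. induction n; [unfold vsum; simpl; rewrite vadd_0; reflexivity|]. rewrite !vsum_S, IHn. veq. Qed.

Lemma vsum_scal {V : IPS} a (f : nat -> V) n : vsum (fun i => vscal a (f i)) n = vscal a (vsum f n).
Proof. induction n; [unfold vsum; simpl; veq|]. rewrite !vsum_S, IHn. veq. Qed.

Lemma eq_of_inner_all {V : IPS} (x y : V) : (forall z, inner x z = inner y z) -> x = y.
Proof. intros H. apply eq_of_inner. unfold vsub at 1. rewrite inner_add_l, inner_scal_l, H. ring. Qed.

Lemma norm_zero {V : IPS} (N : V -> R) : is_norm N -> N vzero = 0.
Proof.
  intros (_&_&H&_). assert (E : vscal 0 vzero = (vzero : V)) by veq.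
  rewrite <- E, H, Rabs_R0; ring.
Qed.

Lemma norm_opp {V : IPS} (N : V -> R) x : is_norm N -> N (vscal (-1) x) = N x.
Proof. intros (_&_&H&_). rewrite H, Rabs_left by lra. ring. Qed.

Lemma norm_pos {V : IPS} (N : V -> R) x : is_norm N -> x <> vzero -> 0 < N x.
Proof. intros (H0&H1&_) Hx. destruct (H0 x); auto. exfalso; apply Hx; auto. Qed.

Lemma norm_scale {V : IPS} (N : V -> R) c : is_norm N -> 0 < c -> is_norm (fun x => c * N x).
Proof.
  intros (H0&H1&H2&H3) Hc. repeat split.
  - intros x. specialize (H0 x). nra.
  - intros x Hx. apply H1. nra.
  - intros a x. rewrite H2. ring.
  - intros x y. specialize (H3 x y). nra.
Qed.

Lemma norm_sub_tri {V : IPS} (N : V -> R) x y z :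
  is_norm N -> N (vsub x y) <= N (vsub x z) + N (vsub z y).
Proof. intros HN. assert (E : vsub x y = vadd (vsub x z) (vsub z y)) by veq. rewrite E. apply HN. Qed.

Lemma norm_vsum {V : IPS} (N : V -> R) f n : is_norm N -> N (vsum f n) <= rsum (fun i => N (f i)) n.
Proof.
  intros HN. induction n; [unfold vsum, rsum; simpl; rewrite norm_zero; auto; lra|].
  rewrite vsum_S, rsum_S. eapply Rle_trans; [apply HN | lra].
Qed.

Lemma Rsup_spec E : bound E -> (exists x, E x) -> is_lub E (Rsup E).
Proof.
  intros Hb He. unfold Rsup. destruct excluded_middle_informative as [H|H].
  - destruct (completeness E (proj1 H) (proj2 H)) as [m Hm]; exact Hm.
  - exfalso; apply H; split; auto.
Qed.

Lemma Rsup_ub E x : bound E -> E x -> x <= Rsup E.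
Proof. intros Hb Hx. apply (Rsup_spec E Hb (ex_intro _ x Hx)); auto. Qed.

Lemma Rsup_le E b : (exists x, E x) -> (forall x, E x -> x <= b) -> Rsup E <= b.
Proof. intros He Hb. apply (Rsup_spec E (ex_intro _ b Hb) He). exact Hb. Qed.

Lemma Rinf_le E r : (forall s, E s -> 0 <= s) -> E r -> Rinf E <= r.
Proof.
  intros Hp Hr. unfold Rinf.
  assert (-r <= Rsup (fun s => E (-s))); [|lra].
  apply Rsup_ub; [|rewrite Ropp_involutive; auto].
  exists 0. intros s Hs. apply Hp in Hs. lra.
Qed.

Lemma Rinf_ge E b : (exists r, E r) -> (forall r, E r -> b <= r) -> b <= Rinf E.
Proof.
  intros [r Hr] Hb. unfold Rinf.
  assert (Rsup (fun s => E (-s)) <= -b); [|lra].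
  apply Rsup_le; [exists (-r); rewrite Ropp_involutive; auto|].
  intros x Hx. apply Hb in Hx. lra.
Qed.

Lemma Rinf_sandwich (A B C : R -> Prop) :
  (exists r, A r) -> (forall r, C r -> 0 <= r) ->
  (forall r, A r -> B r) -> (forall r, B r -> C r) -> (forall r, C r -> Rinf A <= r) ->
  Rinf B = Rinf A /\ Rinf A = Rinf C.
Proof.
  intros [a Ha] Hpos HAB HBC HCA.
  assert (Rinf B <= Rinf A).
  { apply Rinf_ge; [exists a; auto|]. intros r Hr. apply Rinf_le; auto. }
  assert (Rinf C <= Rinf B).
  { apply Rinf_ge; [exists a; auto|]. intros r Hr. apply Rinf_le; auto. }
  assert (Rinf A <= Rinf C) by (apply Rinf_ge; [exists a; auto | auto]).
  split; lra.
Qed.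

Lemma fun_choice_below {B : Type} (b0 : B) (P : nat -> B -> Prop) k :
  (forall i, (i < k)%nat -> exists b, P i b) -> exists f, forall i, (i < k)%nat -> P i (f i).
Proof.
  intros H.
  assert (H' : forall i, exists b, (i < k)%nat -> P i b).
  { intros i. destruct (Nat.lt_ge_cases i k) as [Hi|Hi].
    - destruct (H i Hi) as [b Hb]. exists b; auto.
    - exists b0. intros Hi'. lia. }
  exists (fun i => proj1_sig (constructive_indefinite_description _ (H' i))).
  intros i Hi. exact (proj2_sig (constructive_indefinite_description _ (H' i)) Hi).
Qed.

Lemma rmax_ge f n i : (i <= n)%nat -> f i <= rmax_upto f n.
Proof.
  induction n; intros H; simpl; [replace i with O by lia; lra|].
  destruct (Nat.eq_dec i (S n)) as [->|Hne]; [apply Rmax_r|].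
  eapply Rle_trans; [apply IHn; lia | apply Rmax_l].
Qed.

Lemma rmax_le f n B : (forall i, (i <= n)%nat -> f i <= B) -> rmax_upto f n <= B.
Proof.
  induction n; intros H; simpl; [apply H; lia|].
  apply Rmax_lub; [apply IHn; intros; apply H; lia | apply H; lia].
Qed.

Lemma rmax_ext f g n : (forall i, (i <= n)%nat -> f i = g i) -> rmax_upto f n = rmax_upto g n.
Proof.
  intros H. apply Rle_antisym; apply rmax_le; intros i Hi;
    [rewrite H | rewrite <- H]; auto; apply rmax_ge; auto.
Qed.

Lemma rmax_scal a f n : 0 <= a -> rmax_upto (fun i => a * f i) n = a * rmax_upto f n.
Proof. intros Ha. induction n; simpl; [reflexivity|]. rewrite IHn. apply RmaxRmult; auto. Qed.

Lemma rmax_const f n c : (forall i, (i <= n)%nat -> f i = c) -> rmax_upto f n = c.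
Proof.
  intros H. apply Rle_antisym; [apply rmax_le; intros i Hi; rewrite H; auto; lra|].
  rewrite <- (H O) by lia. apply rmax_ge; lia.
Qed.

Definition poshom {V : IPS} (f : V -> R) : Prop := forall a x, 0 <= a -> f (vscal a x) = a * f x.

(* [y] is a [t]-subgradient of [f] at [x0]: [y = t s] for a subgradient [s] of the positively
   homogeneous function [f] at [x0] (for [t > 0]), written without dividing by [t]. *)
Definition tsubgrad {V : IPS} (f : V -> R) (x0 : V) (t : R) (y : V) : Prop :=
  (forall x, inner y x <= t * f x) /\ inner y x0 = t * f x0.

Lemma poshom_zero {V : IPS} (f : V -> R) : poshom f -> f vzero = 0.
Proof. intros H. assert (E : vscal 0 vzero = (vzero : V)) by veq. rewrite <- E, H; lra. Qed.

Lemma norm_poshom {V : IPS} (N : V -> R) : is_norm N -> poshom N.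
Proof. intros (_&_&H&_) a x Ha. rewrite H, Rabs_right; lra. Qed.

Lemma subdiff_iff {V : IPS} (f : V -> R) x0 g : poshom f -> (subdiff f x0 g <-> tsubgrad f x0 1 g).
Proof.
  intros Hf. unfold subdiff, tsubgrad. split.
  - intros H.
    assert (E : inner g x0 = f x0).
    { pose proof (H vzero) as H1. pose proof (H (vscal 2 x0)) as H2.
      rewrite poshom_zero in H1 by auto. rewrite Hf in H2 by lra. vexpand. lra. }
    split; [|lra]. intros x. pose proof (H x) as H1. vexpand. lra.
  - intros [H1 H2] y. pose proof (H1 y) as H3. vexpand. lra.
Qed.

Lemma cone_subdiff_iff {V : IPS} (f : V -> R) x0 y :
  poshom f -> (cone (subdiff f x0) y <-> exists t, 0 < t /\ tsubgrad f x0 t y).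
Proof.
  intros Hf. split.
  - intros (t & s & Ht & Hs & ->). apply subdiff_iff in Hs as [H1 H2]; auto.
    exists t. split; auto. split.
    + intros x. rewrite inner_scal_l. specialize (H1 x). nra.
    + rewrite inner_scal_l, H2. ring.
  - intros (t & Ht & H1 & H2). exists t, (vscal (/ t) y). split; [auto|split].
    + apply subdiff_iff; auto. split.
      * intros x. rewrite inner_scal_l. specialize (H1 x).
        apply (Rmult_le_reg_l t); auto. field_simplify; lra.
      * rewrite inner_scal_l, H2. field. lra.
    + veq. lra.
Qed.

Lemma tsubgrad_scal {V : IPS} (f : V -> R) x0 t a y :
  0 <= a -> tsubgrad f x0 t y -> tsubgrad f x0 (a * t) (vscal a y).
Proof.
  intros Ha [H1 H2]. split.
  - intros x. rewrite inner_scal_l. specialize (H1 x). rewrite Rmult_assoc.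
    apply Rmult_le_compat_l; auto.
  - rewrite inner_scal_l, H2. ring.
Qed.

Lemma tsubgrad_add {V : IPS} (f : V -> R) x0 s t y z :
  tsubgrad f x0 s y -> tsubgrad f x0 t z -> tsubgrad f x0 (s + t) (vadd y z).
Proof.
  intros [H1 H2] [H3 H4]. split.
  - intros x. rewrite inner_add_l. specialize (H1 x). specialize (H3 x). lra.
  - rewrite inner_add_l, H2, H4. ring.
Qed.

Lemma tsubgrad_vsum {V : IPS} (f : V -> R) x0 (t : nat -> R) (ys : nat -> V) n :
  (forall i, (i < n)%nat -> tsubgrad f x0 (t i) (ys i)) -> tsubgrad f x0 (rsum t n) (vsum ys n).
Proof.
  intros H. induction n.
  - unfold rsum, vsum; simpl. split; [intros x|]; rewrite inner_zero_l, Rmult_0_l; lra.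
  - rewrite rsum_S, vsum_S. apply tsubgrad_add; [apply IHn; intros i Hi|]; apply H; lia.
Qed.

Lemma tsubgrad_abs {V : IPS} (N : V -> R) x0 t y :
  is_norm N -> tsubgrad N x0 t y -> forall x, Rabs (inner y x) <= t * N x.
Proof.
  intros HN [H _] x. apply Rabs_le. split; [|auto].
  pose proof (H (vscal (-1) x)) as H1. rewrite inner_scal_r, norm_opp in H1 by exact HN. lra.
Qed.

Lemma bound_of_unit_ball {V : IPS} (N : V -> R) (y : V) c :
  is_norm N -> (forall x, N x <= 1 -> inner y x <= c) -> forall x, inner y x <= c * N x.
Proof.
  intros HN H x. destruct (Req_dec (N x) 0) as [E|E].
  - destruct HN as (_&Hdef&_). rewrite E, (Hdef x E), inner_zero_r. lra.
  - assert (Hp : 0 < N x) by (destruct HN as (H0&_); destruct (H0 x); lra).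
    assert (Hu : N (vscal (/ N x) x) <= 1).
    { rewrite norm_poshom by (auto; left; apply Rinv_0_lt_compat; auto). right; field; lra. }
    specialize (H _ Hu). rewrite inner_scal_r in H.
    apply (Rmult_le_compat_l (N x)) in H; [|lra].
    replace (N x * (/ N x * inner y x)) with (inner y x) in H by (field; lra). lra.
Qed.

Definition orthonormal {V : IPS} (u : nat -> V) (m : nat) : Prop :=
  forall i j, (i < m)%nat -> (j < m)%nat -> inner (u i) (u j) = if Nat.eqb i j then 1 else 0.

Definition proj {V : IPS} (u : nat -> V) (m : nat) (v : V) : V :=
  vsum (fun j => vscal (inner v (u j)) (u j)) m.

Definition onb {V : IPS} (u : nat -> V) (m : nat) : Prop :=
  orthonormal u m /\ forall v, proj u m v = v.

Lemma inner_proj_basis {V : IPS} (u : nat -> V) m v i : orthonormal u m -> (i < m)%nat ->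
  inner (proj u m v) (u i) = inner v (u i).
Proof.
  intros Ho Hi. unfold proj. rewrite inner_vsum_l.
  rewrite (rsum_single _ m i Hi); [rewrite inner_scal_l, Ho, Nat.eqb_refl; auto; ring|].
  intros j Hj Hne. rewrite inner_scal_l, Ho; auto. destruct (Nat.eqb_spec j i); [lia|ring].
Qed.

Lemma inner_proj_orth {V : IPS} (u : nat -> V) m v w :
  (forall j, (j < m)%nat -> inner (u j) w = 0) -> inner (proj u m v) w = 0.
Proof.
  intros H. unfold proj. rewrite inner_vsum_l, (rsum_ext _ (fun _ => 0)); [apply rsum_0|].
  intros j Hj. rewrite inner_scal_l, H; auto; ring.
Qed.

Lemma proj_linear {V : IPS} (u : nat -> V) m a b (x y : V) :
  proj u m (vadd (vscal a x) (vscal b y)) = vadd (vscal a (proj u m x)) (vscal b (proj u m y)).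
Proof. unfold proj. rewrite <- !vsum_scal, <- vsum_add. apply vsum_ext; intros. veq. Qed.

Lemma orthonormal_extend {V : IPS} (u : nat -> V) m v : orthonormal u m ->
  exists u' m', orthonormal u' m' /\ proj u' m' v = v /\
    forall w, proj u m w = w -> proj u' m' w = w.
Proof.
  intros Ho. set (r := vsub v (proj u m v)).
  assert (Hr : forall j, (j < m)%nat -> inner (u j) r = 0).
  { intros j Hj. unfold r, vsub. rewrite inner_sym, inner_add_l, inner_scal_l, inner_proj_basis; auto. ring. }
  destruct (Req_dec (inner r r) 0) as [H0|H0].
  { exists u, m. repeat split; auto. symmetry. apply eq_of_inner. exact H0. }
  assert (Hpos : 0 < inner r r) by (destruct (inner_pos V r); lra).
  set (nr := sqrt (inner r r)).
  assert (Hnr : 0 < nr) by (apply sqrt_lt_R0; auto).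
  assert (Hnr2 : nr * nr = inner r r) by (apply sqrt_sqrt; lra).
  set (w := vscal (/ nr) r).
  assert (Hwu : forall j, (j < m)%nat -> inner (u j) w = 0).
  { intros j Hj. unfold w. rewrite inner_scal_r, Hr; auto; ring. }
  set (u' := fun j => if Nat.eqb j m then w else u j).
  assert (Hpr : forall z, proj u' (S m) z = vadd (proj u m z) (vscal (inner z w) w)).
  { intros z. unfold proj. rewrite vsum_S. unfold u' at 3 4. rewrite Nat.eqb_refl. f_equal.
    apply vsum_ext. intros j Hj. unfold u'. destruct (Nat.eqb_spec j m); [lia|auto]. }
  exists u', (S m). split; [|split].
  - intros i j Hi Hj. unfold u'.
    destruct (Nat.eqb_spec i m) as [->|Him]; destruct (Nat.eqb_spec j m) as [->|Hjm].
    + rewrite Nat.eqb_refl. unfold w. rewrite inner_scal_l, inner_scal_r, <- Hnr2. field. lra.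
    + rewrite inner_sym, Hwu by lia. destruct (Nat.eqb_spec m j); [lia|auto].
    + rewrite Hwu by lia. destruct (Nat.eqb_spec i m); [lia|auto].
    + apply Ho; lia.
  - assert (E : inner v w = nr).
    { assert (Ev : v = vadd r (proj u m v)) by (unfold r; veq).
      rewrite Ev at 1. rewrite inner_add_l, inner_proj_orth by auto.
      unfold w. rewrite inner_scal_r, <- Hnr2. field. lra. }
    rewrite Hpr, E. unfold w, r. veq. lra.
  - intros z Hz. rewrite Hpr. rewrite <- Hz at 2. rewrite inner_proj_orth by auto. rewrite Hz. veq.
Qed.

Lemma onb_exists (V : IPS) : exists (u : nat -> V) m, onb u m.
Proof.
  destruct (fin_dim V) as (n & e & He).
  assert (Hspan : forall p, exists u m, orthonormal u m /\ forall i, (i < p)%nat -> proj u m (e i) = e i).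
  { induction p as [|p (u & m & Ho & Hp)].
    - exists (fun _ => vzero), O. split; [intros i j Hi; lia | intros; lia].
    - destruct (orthonormal_extend u m (e p) Ho) as (u' & m' & Ho' & Hv & Hfix).
      exists u', m'. split; auto. intros i Hi.
      destruct (Nat.eq_dec i p) as [->|Hne]; auto. apply Hfix, Hp. lia. }
  destruct (Hspan n) as (u & m & Ho & Hp). exists u, m. split; auto.
  intros v. destruct (He v) as [c ->].
  assert (forall p, (p <= n)%nat ->
    proj u m (gsum vzero vadd (fun i => vscal (c i) (e i)) p) = gsum vzero vadd (fun i => vscal (c i) (e i)) p)
    as Hsum; [|apply Hsum; lia].
  induction p as [|p IH]; intros Hpn.
  - simpl. unfold proj. rewrite (vsum_ext _ (fun j => vscal 0 (u j))), vsum_scal; [veq|].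
    intros j Hj. rewrite inner_zero_l. reflexivity.
  - simpl. rewrite <- (vscal_1 V (gsum _ _ _ p)), proj_linear, IH, Hp by lia. rewrite vscal_1. reflexivity.
Qed.

Definition linear {V : IPS} (f : V -> R) : Prop :=
  (forall x y, f (vadd x y) = f x + f y) /\ (forall a x, f (vscal a x) = a * f x).

Lemma riesz {V : IPS} (u : nat -> V) m (f : V -> R) : onb u m -> linear f ->
  forall x, f x = inner x (vsum (fun j => vscal (f (u j)) (u j)) m).
Proof.
  intros [_ Hf] [Hadd Hsc] x. rewrite <- (Hf x) at 1. unfold proj. rewrite inner_vsum_r.
  assert (Hlin : forall n, f (vsum (fun j => vscal (inner x (u j)) (u j)) n)
                           = rsum (fun j => inner x (u j) * f (u j)) n).
  { induction n as [|n IH].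
    - unfold vsum, rsum; simpl. rewrite <- (Rmult_0_l (f vzero)), <- Hsc. f_equal. veq.
    - rewrite vsum_S, rsum_S, Hadd, Hsc, IH. reflexivity. }
  rewrite Hlin. apply rsum_ext. intros j Hj. rewrite inner_scal_r. ring.
Qed.

Lemma cv_inv_succ : Un_cv (fun n => / (INR n + 1)) 0.
Proof.
  intros eps He. destruct (archimed_cor1 eps He) as (N0 & H1 & H2). exists N0. intros n Hn.
  unfold R_dist. rewrite Rminus_0_r, Rabs_right by (left; apply RinvN_pos).
  eapply Rle_lt_trans; [|exact H1]. apply Rlt_le, Rinv_lt_contravar.
  - apply Rmult_lt_0_compat; [apply lt_0_INR; lia | pose proof (pos_INR n); lra].
  - apply le_INR in Hn. lra.
Qed.

Lemma cv_const_mult (a : nat -> R) c : Un_cv a 0 -> Un_cv (fun n => a n * c) 0.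
Proof.
  intros Ha. replace 0 with (0 * c) by ring. apply CV_mult; auto.
  intros eps He. exists O. intros n _. unfold R_dist. rewrite Rminus_diag, Rabs_R0. exact He.
Qed.

Lemma cv_abs_sub (a : nat -> R) l : Un_cv a l -> Un_cv (fun n => Rabs (a n - l)) 0.
Proof.
  intros Ha eps He. destruct (Ha eps He) as [N0 H]. exists N0. intros n Hn.
  unfold R_dist in *. rewrite Rminus_0_r, Rabs_Rabsolu. auto.
Qed.

Lemma cv_rsum (g : nat -> nat -> R) p :
  (forall i, (i < p)%nat -> Un_cv (fun n => g n i) 0) -> Un_cv (fun n => rsum (g n) p) 0.
Proof.
  induction p; intros H.
  - intros eps He. exists O. intros n _. unfold R_dist, rsum; simpl. rewrite Rminus_0_r, Rabs_R0; lra.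
  - replace 0 with (0 + 0) by ring. apply (CV_plus (fun n => rsum (g n) p) (fun n => g n p)).
    + apply IHp; intros; apply H; lia.
    + apply H; lia.
Qed.

Lemma le_of_cv (T : nat -> R) c : Un_cv T 0 -> (forall n, c <= T n) -> c <= 0.
Proof.
  intros Hc H. destruct (Rle_dec c 0) as [|Hn]; auto. exfalso.
  destruct (Hc c) as [N0 HN]; [lra|]. specialize (HN N0 (le_n _)). specialize (H N0).
  unfold R_dist in HN. rewrite Rminus_0_r in HN. apply Rabs_def2 in HN. lra.
Qed.

Lemma cauchy_of_dominated (b e : nat -> R) :
  Un_cv e 0 -> (forall n l, Rabs (b n - b l) <= e n + e l) -> Cauchy_crit b.
Proof.
  intros He Hb eps Heps. destruct (He (eps / 2)) as [N0 HN]; [lra|].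
  exists N0. intros n l Hn Hl. unfold R_dist in *.
  specialize (HN n Hn) as H1. specialize (HN l Hl) as H2. rewrite Rminus_0_r in H1, H2.
  apply Rabs_def2 in H1, H2. specialize (Hb n l). lra.
Qed.

Definition lincomb {V : IPS} (u : nat -> V) (p : nat) (a : nat -> R) : V :=
  vsum (fun i => vscal (a i) (u i)) p.

Lemma lincomb_sub {V : IPS} (u : nat -> V) p a b :
  lincomb u p (fun i => a i - b i) = vsub (lincomb u p a) (lincomb u p b).
Proof.
  unfold lincomb, vsub. rewrite <- vsum_scal, <- vsum_add. apply vsum_ext; intros. veq.
Qed.

Lemma lincomb_scal {V : IPS} (u : nat -> V) p c a :
  lincomb u p (fun i => c * a i) = vscal c (lincomb u p a).
Proof. unfold lincomb. rewrite <- vsum_scal. apply vsum_ext; intros. veq. Qed.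

Lemma norm_lincomb {V : IPS} (N : V -> R) u p a : is_norm N ->
  N (lincomb u p a) <= rsum (fun i => Rabs (a i) * N (u i)) p.
Proof.
  intros HN. eapply Rle_trans; [apply norm_vsum; auto|].
  apply rsum_le. intros i Hi. destruct HN as (_&_&H&_). rewrite H. lra.
Qed.

Definition coord_bounded {V : IPS} (N : V -> R) (u : nat -> V) (p : nat) : Prop :=
  exists C, 0 <= C /\ forall a j, (j < p)%nat -> Rabs (a j) <= C * N (lincomb u p a).

(* With controlled coordinates, the span of [u 0 .. u (p-1)] is closed: a vector that is
   approximated arbitrarily well by it belongs to it (coordinates converge, by completeness). *)
Lemma span_closed {V : IPS} (N : V -> R) (u : nat -> V) p v : is_norm N -> coord_bounded N u p ->
  (forall n, exists a, N (vsub v (lincomb u p a)) < / (INR n + 1)) -> exists L, v = lincomb u p L.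
Proof.
  intros HN (C & HC0 & HC) Happ.
  set (A := fun n => proj1_sig (constructive_indefinite_description _ (Happ n))).
  assert (HA : forall n, N (vsub v (lincomb u p (A n))) < / (INR n + 1))
    by (intros n; exact (proj2_sig (constructive_indefinite_description _ (Happ n)))).
  assert (Hcauchy : forall j, (j < p)%nat -> Cauchy_crit (fun n => A n j)).
  { intros j Hj. apply (cauchy_of_dominated _ (fun n => C * / (INR n + 1))).
    - pose proof (cv_const_mult _ C cv_inv_succ) as Hcv.
      eapply Un_cv_ext; [|exact Hcv]. intros n; simpl; ring.
    - intros n l. eapply Rle_trans; [apply (HC (fun i => A n i - A l i) j Hj)|].
      rewrite lincomb_sub.
      assert (Hnl : N (vsub (lincomb u p (A n)) (lincomb u p (A l)))
                    <= N (vsub v (lincomb u p (A n))) + N (vsub v (lincomb u p (A l)))).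
      { eapply Rle_trans; [apply (norm_sub_tri N _ _ v HN)|].
        assert (E : vsub (lincomb u p (A n)) v = vscal (-1) (vsub v (lincomb u p (A n)))) by veq.
        rewrite E, norm_opp by auto. lra. }
      pose proof (HA n). pose proof (HA l). nra. }
  destruct (fun_choice_below 0 (fun j l => Un_cv (fun n => A n j) l) p) as [L HL].
  { intros j Hj. destruct (R_complete _ (Hcauchy j Hj)) as [l Hl]. exists l; auto. }
  exists L. apply eq_of_inner. pose proof HN as (H0&Hdef&_).
  rewrite (Hdef (vsub v (lincomb u p L))); [apply inner_zero_l|].
  apply Rle_antisym; [|apply H0].
  apply (le_of_cv (fun n => / (INR n + 1) + rsum (fun i => Rabs (A n i - L i) * N (u i)) p)).
  - replace 0 with (0 + 0) by ring. apply CV_plus; [exact cv_inv_succ|].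
    apply (cv_rsum (fun n i => Rabs (A n i - L i) * N (u i))).
    intros i Hi. apply cv_const_mult, cv_abs_sub, HL; auto.
  - intros n. eapply Rle_trans; [apply (norm_sub_tri N _ _ (lincomb u p (A n)) HN)|].
    rewrite <- lincomb_sub. pose proof (HA n). pose proof (norm_lincomb N u p (fun i => A n i - L i) HN). lra.
Qed.

Lemma span_gap {V : IPS} (N : V -> R) (u : nat -> V) m p : is_norm N -> orthonormal u m -> (p < m)%nat ->
  coord_bounded N u p -> exists d, 0 < d /\ forall a, d <= N (vsub (u p) (lincomb u p a)).
Proof.
  intros HN Ho Hp HC. apply NNPP. intros Hneg.
  assert (Happ : forall n, exists a, N (vsub (u p) (lincomb u p a)) < / (INR n + 1)).
  { intros n. apply NNPP. intros H1. apply Hneg. exists (/ (INR n + 1)). split; [apply RinvN_pos|].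
    intros a. apply Rnot_lt_le. intros H2. apply H1. exists a; auto. }
  destruct (span_closed N u p (u p) HN HC Happ) as [L HL].
  pose proof (Ho p p Hp Hp) as H1. rewrite Nat.eqb_refl, HL in H1 at 1.
  unfold lincomb in H1. rewrite inner_vsum_l, (rsum_ext _ (fun _ => 0)), rsum_0 in H1; [lra|].
  intros i Hi. rewrite inner_scal_l, Ho by lia. destruct (Nat.eqb_spec i p); [lia|ring].
Qed.

Lemma coord_bounded_S {V : IPS} (N : V -> R) (u : nat -> V) m p : is_norm N -> orthonormal u m ->
  (p < m)%nat -> coord_bounded N u p -> coord_bounded N u (S p).
Proof.
  intros HN Ho Hp HC. destruct (span_gap N u m p HN Ho Hp HC) as (d & Hd0 & Hd).
  destruct HC as (C & HC0 & HC).
  assert (HNu : 0 <= N (u p)) by apply HN.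
  exists (Rmax (/ d) (C * (1 + N (u p) / d))). split.
  { eapply Rle_trans; [|apply Rmax_l]. left; apply Rinv_0_lt_compat; auto. }
  intros a j Hj.
  assert (Hx : lincomb u (S p) a = vadd (lincomb u p a) (vscal (a p) (u p))) by reflexivity.
  assert (HNx : 0 <= N (lincomb u (S p) a)) by apply HN.
  (* the last coordinate is controlled by the gap [d] *)
  assert (Hap : Rabs (a p) * d <= N (lincomb u (S p) a)).
  { destruct (Req_dec (a p) 0) as [E|E]; [rewrite E, Rabs_R0, Rmult_0_l; auto|].
    assert (E2 : lincomb u (S p) a
                 = vscal (a p) (vsub (u p) (lincomb u p (fun i => - / a p * a i)))).
    { rewrite lincomb_scal, Hx. veq. }
    rewrite E2. destruct HN as (_&_&H2&_). rewrite H2.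
    apply Rmult_le_compat_l; [apply Rabs_pos | apply Hd]. }
  assert (Hap2 : Rabs (a p) <= / d * N (lincomb u (S p) a)).
  { apply (Rmult_le_reg_r d); auto. field_simplify; lra. }
  destruct (Nat.eq_dec j p) as [->|Hne].
  - eapply Rle_trans; [exact Hap2|]. apply Rmult_le_compat_r; auto. apply Rmax_l.
  - (* the other coordinates are controlled through the combination of the first [p] vectors *)
    assert (E2 : N (lincomb u p a) <= N (lincomb u (S p) a) + Rabs (a p) * N (u p)).
    { assert (E1 : lincomb u p a = vadd (lincomb u (S p) a) (vscal (- a p) (u p))) by (rewrite Hx; veq).
      rewrite E1. eapply Rle_trans; [apply HN|]. destruct HN as (_&_&H2&_). rewrite H2, Rabs_Ropp. lra. }
    eapply Rle_trans; [apply HC; lia|].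
    apply Rle_trans with (C * (1 + N (u p) / d) * N (lincomb u (S p) a)).
    + assert (Rabs (a p) * N (u p) <= / d * N (lincomb u (S p) a) * N (u p))
        by (apply Rmult_le_compat_r; auto).
      replace (C * (1 + N (u p) / d) * N (lincomb u (S p) a)) with
        (C * (N (lincomb u (S p) a) + / d * N (lincomb u (S p) a) * N (u p))) by (field; lra).
      apply Rmult_le_compat_l; auto. lra.
    + apply Rmult_le_compat_r; auto. apply Rmax_r.
Qed.

Lemma coord_bounded_le {V : IPS} (N : V -> R) (u : nat -> V) m p : is_norm N -> orthonormal u m ->
  (p <= m)%nat -> coord_bounded N u p.
Proof.
  intros HN Ho. induction p; intros Hp.
  - exists 0. split; [lra | intros; lia].
  - apply (coord_bounded_S N u m); [auto | auto | lia | apply IHp; lia].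
Qed.

Lemma functional_bounded {V : IPS} (N : V -> R) (y : V) : is_norm N ->
  exists B, forall x, Rabs (inner x y) <= B * N x.
Proof.
  intros HN. destruct (onb_exists V) as (u & m & Ho & Hf).
  destruct (coord_bounded_le N u m m HN Ho (le_n _)) as (C & HC0 & HC).
  exists (C * rsum (fun j => Rabs (inner (u j) y)) m). intros x.
  assert (Ex : x = lincomb u m (fun j => inner x (u j))) by (symmetry; apply Hf).
  rewrite Ex at 1. unfold lincomb. rewrite inner_vsum_l.
  eapply Rle_trans; [apply Rabs_rsum|].
  replace (C * rsum (fun j => Rabs (inner (u j) y)) m * N x) with
    (rsum (fun j => (C * N x) * Rabs (inner (u j) y)) m) by (rewrite rsum_scal; ring).
  apply rsum_le. intros j Hj. rewrite inner_scal_l, Rabs_mult.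
  apply Rmult_le_compat_r; [apply Rabs_pos|].
  pose proof (HC (fun j => inner x (u j)) j Hj) as H. rewrite <- Ex in H. exact H.
Qed.

Lemma dual_norm_le_iff {V : IPS} (N : V -> R) (y x0 : V) c : is_norm N -> x0 <> vzero ->
  (dual_norm N y <= c <-> forall x, Rabs (inner x y) <= c * N x).
Proof.
  intros HN Hx0.
  assert (Hunit : forall x, 0 < N x -> N (vscal (/ N x) x) = 1).
  { intros x Hx. rewrite norm_poshom by (auto; left; apply Rinv_0_lt_compat; auto). field. lra. }
  split.
  - intros Hc x. destruct (functional_bounded N y HN) as [B HB].
    destruct (Req_dec (N x) 0) as [E|E].
    { destruct HN as (_&Hdef&_). rewrite E, (Hdef x E), inner_zero_l, Rabs_R0. lra. }
    assert (Hp : 0 < N x) by (destruct HN as (H0&_); destruct (H0 x); lra).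
    assert (Hle : Rabs (inner (vscal (/ N x) x) y) <= dual_norm N y).
    { apply Rsup_ub; [|exists (vscal (/ N x) x); auto].
      exists B. intros r (z & Hz & ->). specialize (HB z). rewrite Hz in HB. lra. }
    rewrite inner_scal_l, Rabs_mult, Rabs_right in Hle by (left; apply Rinv_0_lt_compat; auto).
    apply (Rmult_le_compat_r (N x)) in Hle; [|lra].
    replace (/ N x * Rabs (inner x y) * N x) with (Rabs (inner x y)) in Hle by (field; lra).
    apply (Rmult_le_compat_r (N x)) in Hc; lra.
  - intros H. apply Rsup_le.
    + pose proof (norm_pos N x0 HN Hx0). exists (Rabs (inner (vscal (/ N x0) x0) y)).
      exists (vscal (/ N x0) x0). auto.
    + intros r (x & Hx & ->). specialize (H x). rewrite Hx in H. lra.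
Qed.

(** Hahn–Banach in the space of sequences [nat -> V] (finitely many steps suffice). *)

Definition ezero {V : IPS} : nat -> V := fun _ => vzero.
Definition eadd {V : IPS} (x y : nat -> V) : nat -> V := fun p => vadd (x p) (y p).
Definition escal {V : IPS} (a : R) (x : nat -> V) : nat -> V := fun p => vscal a (x p).

Definition iota {V : IPS} (i : nat) (x : V) : nat -> V := fun p => if Nat.eqb p i then x else vzero.
Definition trunc {V : IPS} (k : nat) (z : nat -> V) : nat -> V :=
  fun p => if Nat.ltb p k then z p else vzero.

Definition subspace {V : IPS} (W : (nat -> V) -> Prop) : Prop :=
  W ezero /\ (forall x y, W x -> W y -> W (eadd x y)) /\ (forall a x, W x -> W (escal a x)).
Definition linear_on {V : IPS} (W : (nat -> V) -> Prop) (F : (nat -> V) -> R) : Prop :=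
  (forall x y, W x -> W y -> F (eadd x y) = F x + F y) /\ (forall a x, W x -> F (escal a x) = a * F x).
Definition sublinear {V : IPS} (q : (nat -> V) -> R) : Prop :=
  (forall x y, q (eadd x y) <= q x + q y) /\ (forall a x, 0 <= a -> q (escal a x) = a * q x).

Ltac eeq := apply functional_extensionality; intro;
  unfold eadd, escal, ezero; veq; lra.
Ltac eeq_cases := apply functional_extensionality; intro;
  unfold eadd, escal, ezero, iota, trunc;
  repeat match goal with |- context [if ?b then _ else _] => destruct b end; veq.

Section HahnBanach.

Context {V : IPS}.
Implicit Types (W : (nat -> V) -> Prop) (F q : (nat -> V) -> R) (v w z : nat -> V).

Lemma decomp_unique W v (w1 w2 : nat -> V) t1 t2 : subspace W -> ~ W v -> W w1 -> W w2 ->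
  eadd w1 (escal t1 v) = eadd w2 (escal t2 v) -> t1 = t2 /\ w1 = w2.
Proof.
  intros (HW0 & HWa & HWs) Hv H1 H2 H.
  set (Z := eadd (eadd w1 (escal t1 v)) (escal (-1) (eadd w2 (escal t2 v)))).
  assert (HZ : Z = ezero) by (unfold Z; rewrite H; eeq).
  assert (Ht : t1 = t2).
  { apply NNPP; intros Hne. apply Hv.
    assert (Ev : v = escal (/ (t1 - t2)) (eadd Z (escal (-1) (eadd w1 (escal (-1) w2))))).
    { unfold Z. apply functional_extensionality; intro; unfold eadd, escal. veq. lra. }
    rewrite Ev, HZ. apply HWs, HWa; [|apply HWs, HWa; [|apply HWs]]; auto. }
  subst t2. split; auto.
  assert (E : w1 = eadd (eadd w1 (escal t1 v)) (escal (- t1) v)) by eeq.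
  rewrite E, H. eeq.
Qed.

Definition ext_F W v F c (z : nat -> V) : R :=
  match excluded_middle_informative (exists w t, W w /\ z = eadd w (escal t v)) with
  | left H => let (w, Hw) := constructive_indefinite_description _ H in
              let (t, _) := constructive_indefinite_description _ Hw in F w + t * c
  | right _ => 0
  end.

Lemma ext_F_eq W v F c w t : subspace W -> ~ W v -> W w ->
  ext_F W v F c (eadd w (escal t v)) = F w + t * c.
Proof.
  intros HS Hv Hw. unfold ext_F. destruct excluded_middle_informative as [H|H].
  - destruct constructive_indefinite_description as [w' Hw'].
    destruct constructive_indefinite_description as [t' [Hw'' Ht']].
    destruct (decomp_unique W v w w' t t' HS Hv Hw Hw'' Ht') as [-> ->]. reflexivity.
  - exfalso. apply H. exists w, t. auto.
Qed.

Lemma hb_gap q W F v : sublinear q -> subspace W -> linear_on W F -> (forall x, W x -> F x <= q x) ->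
  exists c, (forall w, W w -> F w - q (eadd w (escal (-1) v)) <= c) /\
            (forall w, W w -> c <= q (eadd w v) - F w).
Proof.
  intros Hq (HW0 & HWa & HWs) HF Hd.
  assert (Hkey : forall w1 w2, W w1 -> W w2 ->
    F w1 - q (eadd w1 (escal (-1) v)) <= q (eadd w2 v) - F w2).
  { intros w1 w2 H1 H2.
    assert (E : eadd w1 w2 = eadd (eadd w1 (escal (-1) v)) (eadd w2 v)) by eeq.
    pose proof (Hd _ (HWa _ _ H1 H2)) as A1. rewrite (proj1 HF), E in A1 by auto.
    pose proof (proj1 Hq (eadd w1 (escal (-1) v)) (eadd w2 v)). lra. }
  set (A := fun a => exists w, W w /\ a = F w - q (eadd w (escal (-1) v))).
  exists (Rsup A). split.
  - intros w Hw. apply Rsup_ub; [|exists w; auto].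
    exists (q (eadd ezero v) - F ezero). intros a (w' & Hw' & ->). apply Hkey; auto.
  - intros w Hw. apply Rsup_le; [exists (F ezero - q (eadd ezero (escal (-1) v))), ezero; auto|].
    intros a (w' & Hw' & ->). apply Hkey; auto.
Qed.

Lemma hb_extension_bound q W F v c : sublinear q -> subspace W -> linear_on W F ->
  (forall x, W x -> F x <= q x) ->
  (forall w, W w -> F w - q (eadd w (escal (-1) v)) <= c) ->
  (forall w, W w -> c <= q (eadd w v) - F w) ->
  forall w t, W w -> F w + t * c <= q (eadd w (escal t v)).
Proof.
  intros Hq (_ & _ & HWs) HF Hd Hc1 Hc2 w t Hw.
  destruct (Rtotal_order t 0) as [Ht|[Ht|Ht]].
  - (* [w + t v = (-t) (w/(-t) - v)] *)
    pose proof (Hc1 _ (HWs (/ - t) _ Hw)) as H1. rewrite (proj2 HF) in H1 by auto.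
    assert (E : eadd w (escal t v) = escal (- t) (eadd (escal (/ - t) w) (escal (-1) v))).
    { apply functional_extensionality; intro; unfold eadd, escal. veq. lra. }
    rewrite E, (proj2 Hq) by lra.
    apply (Rmult_le_compat_l (- t)) in H1; [|lra].
    replace (- t * (/ - t * F w - q (eadd (escal (/ - t) w) (escal (-1) v)))) with
      (F w + t * q (eadd (escal (/ - t) w) (escal (-1) v))) in H1 by (field; lra). lra.
  - subst t. assert (E : eadd w (escal 0 v) = w) by eeq. rewrite E, Rmult_0_l, Rplus_0_r. auto.
  - (* [w + t v = t (w/t + v)] *)
    pose proof (Hc2 _ (HWs (/ t) _ Hw)) as H1. rewrite (proj2 HF) in H1 by auto.
    assert (E : eadd w (escal t v) = escal t (eadd (escal (/ t) w) v)).
    { apply functional_extensionality; intro; unfold eadd, escal. veq. lra. }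
    rewrite E, (proj2 Hq) by lra.
    apply (Rmult_le_compat_l t) in H1; [|lra].
    replace (t * (q (eadd (escal (/ t) w) v) - / t * F w)) with
      (t * q (eadd (escal (/ t) w) v) - F w) in H1 by (field; lra). lra.
Qed.

Lemma hb_step q W F v : sublinear q -> subspace W -> linear_on W F -> (forall x, W x -> F x <= q x) ->
  exists W' F', subspace W' /\ (forall x, W x -> W' x) /\ W' v /\ linear_on W' F' /\
     (forall x, W x -> F' x = F x) /\ (forall x, W' x -> F' x <= q x).
Proof.
  intros Hq HS HF Hd.
  destruct (classic (W v)) as [Hv|Hv].
  { exists W, F. exact (conj HS (conj (fun x H => H) (conj Hv (conj HF (conj (fun x _ => eq_refl) Hd))))). }
  destruct (hb_gap q W F v Hq HS HF Hd) as (c & Hc1 & Hc2).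
  pose proof HS as (HW0 & HWa & HWs).
  set (W' := fun z => exists w t, W w /\ z = eadd w (escal t v)).
  exists W', (ext_F W v F c). repeat split.
  - exists ezero, 0. split; auto. eeq.
  - intros x y (w1 & t1 & H1 & ->) (w2 & t2 & H2 & ->). exists (eadd w1 w2), (t1 + t2). split; auto. eeq.
  - intros a x (w1 & t1 & H1 & ->). exists (escal a w1), (a * t1). split; auto. eeq.
  - intros x Hx. exists x, 0. split; auto. eeq.
  - exists ezero, 1. split; auto. eeq.
  - intros x y (w1 & t1 & H1 & ->) (w2 & t2 & H2 & ->).
    assert (E : eadd (eadd w1 (escal t1 v)) (eadd w2 (escal t2 v))
                = eadd (eadd w1 w2) (escal (t1 + t2) v)) by eeq.
    rewrite E, !ext_F_eq, (proj1 HF) by auto. ring.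
  - intros a x (w1 & t1 & H1 & ->).
    assert (E : escal a (eadd w1 (escal t1 v)) = eadd (escal a w1) (escal (a * t1) v)) by eeq.
    rewrite E, !ext_F_eq, (proj2 HF) by auto. ring.
  - intros x Hx. assert (E : x = eadd x (escal 0 v)) by eeq.
    rewrite E at 1. rewrite ext_F_eq by auto. ring.
  - intros z (w & t & Hw & ->). rewrite ext_F_eq by auto. apply (hb_extension_bound q W F v c); auto.
Qed.

Lemma hb_list q (l : list (nat -> V)) : forall W F, sublinear q -> subspace W -> linear_on W F ->
  (forall x, W x -> F x <= q x) ->
  exists W' F', subspace W' /\ (forall x, W x -> W' x) /\ (forall v, In v l -> W' v) /\
     linear_on W' F' /\ (forall x, W x -> F' x = F x) /\ (forall x, W' x -> F' x <= q x).
Proof.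
  induction l as [|v l IH]; intros W F Hq HS HF Hd.
  - exists W, F. exact (conj HS (conj (fun x H => H) (conj (fun v H => False_ind _ H)
                   (conj HF (conj (fun x _ => eq_refl) Hd))))).
  - destruct (hb_step q W F v Hq HS HF Hd) as (W1 & F1 & HS1 & Hinc1 & Hv1 & HF1 & Heq1 & Hd1).
    destruct (IH W1 F1 Hq HS1 HF1 Hd1) as (W2 & F2 & HS2 & Hinc2 & Hl2 & HF2 & Heq2 & Hd2).
    exists W2, F2. refine (conj HS2 (conj _ (conj _ (conj HF2 (conj _ Hd2))))).
    + intros x Hx. auto.
    + intros v' [<-|Hin]; auto.
    + intros x Hx. rewrite Heq2, Heq1; auto.
Qed.

Lemma iota_add i (x y : V) : iota i (vadd x y) = eadd (iota i x) (iota i y).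
Proof. eeq_cases. Qed.

Lemma iota_scal i a (x : V) : iota i (vscal a x) = escal a (iota i x).
Proof. eeq_cases. Qed.

Lemma trunc_0 z : trunc 0 z = ezero.
Proof. apply functional_extensionality; intro p. unfold trunc. destruct (Nat.ltb_spec p 0); [lia|reflexivity]. Qed.

Lemma trunc_trunc k z : trunc k (trunc k z) = trunc k z.
Proof. apply functional_extensionality; intro p. unfold trunc. destruct (Nat.ltb p k); reflexivity. Qed.

Lemma trunc_S n z : trunc (S n) z = eadd (trunc n z) (iota n (z n)).
Proof.
  apply functional_extensionality; intro p. unfold trunc, eadd, iota.
  destruct (Nat.ltb_spec p (S n)), (Nat.ltb_spec p n), (Nat.eqb_spec p n); subst; try lia; veq.
Qed.

Lemma subspace_iota W (u : nat -> V) m i : subspace W -> onb u m ->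
  (forall j, (j < m)%nat -> W (iota i (u j))) -> forall x, W (iota i x).
Proof.
  intros (H0 & Ha & Hs) [_ Hf] Hu x. rewrite <- (Hf x). unfold proj.
  assert (Hp : forall p, (p <= m)%nat -> W (iota i (vsum (fun j => vscal (inner x (u j)) (u j)) p)));
    [|apply Hp; lia].
  induction p; intros Hp.
  - replace (iota i (vsum _ 0)) with (ezero : nat -> V) by (unfold vsum; simpl; eeq_cases). exact H0.
  - rewrite vsum_S, iota_add, iota_scal. apply Ha; [apply IHp; lia | apply Hs, Hu; lia].
Qed.

Lemma dominated_extension_repr (k : nat) q W F :
  sublinear q -> subspace W -> linear_on W F -> (forall z, W z -> F z <= q z) ->
  exists gs : nat -> V,
    (forall z, W z -> trunc k z = z -> F z = rsum (fun i => inner (gs i) (z i)) k) /\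
    (forall z, rsum (fun i => inner (gs i) (z i)) k <= q (trunc k z)).
Proof.
  intros Hq HS HF Hd. destruct (onb_exists V) as (u & m & Hb).
  set (l := flat_map (fun i => map (fun j => iota i (u j)) (seq 0 m)) (seq 0 k)).
  destruct (hb_list q l W F Hq HS HF Hd) as (W' & F' & HS' & _ & Hl & HF' & Heq & Hd').
  assert (HWi : forall i, (i < k)%nat -> forall x, W' (iota i x)).
  { intros i Hi. apply (subspace_iota W' u m i HS' Hb). intros j Hj. apply Hl.
    apply in_flat_map. exists i. split; [apply in_seq; lia|].
    apply (in_map (fun j => iota i (u j))). apply in_seq. lia. }
  (* the components [x |-> F' (iota i x)] are linear, hence inner products by Riesz *)
  set (f := fun i x => F' (iota i x)).
  assert (Hfl : forall i, (i < k)%nat -> linear (f i)).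
  { intros i Hi. unfold f. split.
    - intros x y. rewrite iota_add. apply HF'; apply HWi; auto.
    - intros a x. rewrite iota_scal. apply HF'. apply HWi; auto. }
  set (gs := fun i => vsum (fun j => vscal (f i (u j)) (u j)) m).
  assert (Htrunc : forall n, (n <= k)%nat -> forall z,
             W' (trunc n z) /\ F' (trunc n z) = rsum (fun i => inner (gs i) (z i)) n).
  { induction n; intros Hn z.
    - rewrite trunc_0. split; [apply HS'|].
      replace (ezero : nat -> V) with (escal 0 (ezero : nat -> V)) by eeq_cases. rewrite (proj2 HF') by apply HS'.
      unfold rsum; simpl; ring.
    - destruct (IHn ltac:(lia) z) as [HW Hval]. rewrite trunc_S. split.
      + apply HS'; [exact HW | apply HWi; lia].
      + rewrite (proj1 HF'), Hval, rsum_S; [|exact HW | apply HWi; lia].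
        f_equal. unfold gs. rewrite inner_sym. apply (riesz u m (f n) Hb), Hfl. lia. }
  exists gs. split.
  - intros z Hz Hk. rewrite <- Heq by auto. rewrite <- Hk at 1. apply (Htrunc k (le_n _) z).
  - intros z. destruct (Htrunc k (le_n _) z) as [HW <-]. apply Hd'. exact HW.
Qed.

End HahnBanach.

(* Every norm has a subgradient at every nonzero point: extend [t x0 |-> t N x0]. *)
Lemma norm_subgradient_exists {V : IPS} (N : V -> R) (x0 : V) : is_norm N -> x0 <> vzero ->
  exists h, tsubgrad N x0 1 h.
Proof.
  intros HN Hx0.
  assert (Hxx : 0 < inner x0 x0).
  { destruct (inner_pos V x0) as [H|H]; auto. exfalso; apply Hx0, inner_def; auto. }
  set (line := fun t => trunc 1 (fun _ : nat => vscal t x0)).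
  set (W := fun z : nat -> V => exists t, z = line t).
  set (F := fun z : nat -> V => inner (z O) x0 / inner x0 x0 * N x0).
  assert (Hline0 : forall t, line t O = vscal t x0) by reflexivity.
  assert (Hq : sublinear (fun z : nat -> V => N (z O))).
  { split; [intros x y; apply HN | intros a x Ha; apply norm_poshom; auto]. }
  assert (HS : subspace W).
  { unfold W, line, trunc. split; [|split].
    - exists 0. eeq_cases.
    - intros x y (t1 & ->) (t2 & ->). exists (t1 + t2). eeq_cases.
    - intros a x (t & ->). exists (a * t). eeq_cases. }
  assert (HF : linear_on W F).
  { split; intros; unfold F, eadd, escal; vexpand; field; lra. }
  assert (Hd : forall z, W z -> F z <= N (z O)).
  { intros z (t & ->). unfold F. rewrite Hline0, inner_scal_l.
    pose proof (norm_pos N x0 HN Hx0). destruct HN as (_&_&H2&_). rewrite H2.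
    replace (t * inner x0 x0 / inner x0 x0 * N x0) with (t * N x0) by (field; lra).
    apply Rmult_le_compat_r; [lra | apply Rle_abs]. }
  destruct (dominated_extension_repr 1 _ W F Hq HS HF Hd) as (gs & Hext & Hdom).
  exists (gs O). split.
  - intros x. pose proof (Hdom (fun _ => x)) as H. rewrite rsum_1 in H. rewrite Rmult_1_l. exact H.
  - pose proof (Hext (line 1) (ex_intro _ 1 eq_refl) (trunc_trunc _ _)) as H.
    rewrite rsum_1, Hline0, vscal_1 in H. unfold F in H. rewrite Hline0, vscal_1 in H.
    rewrite <- H. field. lra.
Qed.

Lemma norm2_perturb {V : IPS} (a h : V) e : 0 < e ->
  exists dl, 0 < dl /\ norm2 (vsub a (vscal dl h)) <= norm2 a + e.
Proof.
  intros He. set (D := Rabs (2 * inner a h) + inner h h + 1).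
  assert (Hhh : 0 <= inner h h) by apply inner_pos.
  assert (HD : 1 <= D) by (unfold D; pose proof (Rabs_pos (2 * inner a h)); lra).
  set (dl := Rmin 1 (e * e / D)).
  assert (Hdl : 0 < dl) by (apply Rmin_pos; [lra | apply Rdiv_lt_0_compat; nra]).
  assert (Hdl1 : dl <= 1) by apply Rmin_l.
  assert (HdlD : dl * D <= e * e).
  { apply Rle_trans with (e * e / D * D); [apply Rmult_le_compat_r; [lra | apply Rmin_r]|].
    right. field. lra. }
  exists dl. split; auto. unfold norm2.
  rewrite <- (sqrt_square (sqrt (inner a a) + e)) by (pose proof (sqrt_pos (inner a a)); lra).
  apply sqrt_le_1_alt.
  replace ((sqrt (inner a a) + e) * (sqrt (inner a a) + e))
    with (inner a a + 2 * e * sqrt (inner a a) + e * e) by (rewrite <- (sqrt_sqrt (inner a a)) at 1 by apply inner_pos; ring).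
  pose proof (sqrt_pos (inner a a)). vexpand. rewrite (inner_sym _ h a).
  assert (- (2 * inner a h) <= Rabs (2 * inner a h)) by (rewrite <- Rabs_Ropp; apply Rle_abs).
  assert (dl * dl * inner h h <= dl * inner h h) by (apply Rmult_le_compat_r; nra).
  unfold D in HdlD. nra.
Qed.

Section MaxNorm.

Context {V : IPS} (k : nat) (N : nat -> V -> R) (mu : nat -> R) (x0 : V).
Hypothesis hk : (1 <= k)%nat.
Hypothesis hN : forall i, (i < k)%nat -> is_norm (N i).
Hypothesis hmu : forall i, (i < k)%nat -> 0 < mu i /\ mu i * N i x0 = 1.

Let Nmax := max_norm k mu N.

Lemma max_norm_ge i x : (i < k)%nat -> mu i * N i x <= Nmax x.
Proof. intros Hi. apply (rmax_ge (fun i => mu i * N i x)). lia. Qed.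

Lemma max_norm_x0 : Nmax x0 = 1.
Proof. apply rmax_const. intros i Hi. apply hmu. lia. Qed.

Lemma max_norm_poshom : poshom Nmax.
Proof.
  intros a x Ha. unfold Nmax, max_norm. rewrite <- rmax_scal by auto. apply rmax_ext.
  intros i Hi. rewrite norm_poshom by (auto; apply hN; lia). ring.
Qed.

Lemma tsubgrad_max_of_component i t y : (i < k)%nat -> 0 <= t ->
  tsubgrad (N i) x0 t y -> tsubgrad Nmax x0 (t / mu i) y.
Proof.
  intros Hi Ht [H1 H2]. destruct (hmu i Hi) as [Hm Hm1]. split.
  - intros x. specialize (H1 x). pose proof (max_norm_ge i x Hi).
    apply Rle_trans with (t * N i x); auto.
    replace (t / mu i * Nmax x) with (t * (Nmax x / mu i)) by (field; lra).
    apply Rmult_le_compat_l; auto. apply (Rmult_le_reg_l (mu i)); auto. field_simplify; lra.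
  - rewrite H2, max_norm_x0. replace (N i x0) with (/ mu i) by (field_simplify_eq; lra). field. lra.
Qed.

(* The sublinear function [z |-> max_i mu_i N_i z_i] on sequences; on the diagonal it is [Nmax]. *)
Definition qmax (z : nat -> V) : R := rmax_upto (fun i => mu i * N i (z i)) (k - 1).

Lemma qmax_sublinear : sublinear qmax.
Proof.
  split.
  - intros x y. unfold qmax. apply rmax_le. intros i Hi. destruct (hmu i ltac:(lia)) as [Hm _].
    unfold eadd. eapply Rle_trans; [apply Rmult_le_compat_l; [lra | apply (hN i); lia]|].
    rewrite Rmult_plus_distr_l. apply Rplus_le_compat;
      [apply (rmax_ge (fun i => mu i * N i (x i))) | apply (rmax_ge (fun i => mu i * N i (y i)))]; auto.
  - intros a x Ha. unfold qmax, escal. rewrite <- rmax_scal by auto. apply rmax_ext.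
    intros i Hi. rewrite norm_poshom by (auto; apply hN; lia). ring.
Qed.

Lemma qmax_trunc z : qmax (trunc k z) = qmax z.
Proof. apply rmax_ext. intros i Hi. unfold trunc. destruct (Nat.ltb_spec i k); [auto|lia]. Qed.

(* Hahn–Banach for [<g, x>] on the diagonal of [V^k], dominated by [qmax]: [g] is the sum of
   vectors [g_i] whose joint functional [z |-> sum_i <g_i, z_i>] is still dominated by [qmax]. *)
Lemma max_dual_components g : (forall x, inner g x <= Nmax x) ->
  exists (gs : nat -> V), (forall x, rsum (fun i => inner (gs i) x) k = inner g x) /\
    (forall z, rsum (fun i => inner (gs i) (z i)) k <= qmax z).
Proof.
  intros Hg.
  set (diag := fun x : V => trunc k (fun _ : nat => x)).
  set (W := fun z : nat -> V => exists x, z = diag x).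
  set (F := fun z : nat -> V => inner g (z O)).
  assert (Hdiag0 : forall x, diag x O = x).
  { intros x. unfold diag, trunc. destruct (Nat.ltb_spec 0 k); [auto|lia]. }
  assert (HS : subspace W).
  { unfold W, diag. split; [|split].
    - exists vzero. eeq_cases.
    - intros x y (x1 & ->) (x2 & ->). exists (vadd x1 x2). eeq_cases.
    - intros a x (x1 & ->). exists (vscal a x1). eeq_cases. }
  assert (HF : linear_on W F) by (split; intros; unfold F, eadd, escal; vexpand; ring).
  assert (Hd : forall z, W z -> F z <= qmax z).
  { intros z (x & ->). unfold F. rewrite Hdiag0. unfold diag. rewrite qmax_trunc. apply Hg. }
  destruct (dominated_extension_repr k qmax W F qmax_sublinear HS HF Hd) as (gs & Hext & Hdom).
  exists gs. split.
  - intros x. transitivity (F (diag x)); [|unfold F; rewrite Hdiag0; reflexivity].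
    rewrite (Hext (diag x) (ex_intro _ x eq_refl) (trunc_trunc _ _)).
    apply rsum_ext. intros i Hi. unfold diag, trunc. destruct (Nat.ltb_spec i k); [auto|lia].
  - intros z. rewrite <- qmax_trunc. apply Hdom.
Qed.

(* The subdifferential of the max norm at [x0] (where every weighted norm is active) splits
   into scaled subgradients of the individual norms: the [j]-th component [g_j] of
   [max_dual_components] is bounded on the unit ball of [mu_j N_j] by its value at [x0]. *)
Lemma max_subgradient_decomp g : tsubgrad Nmax x0 1 g ->
  exists (gs : nat -> V) (lam : nat -> R),
    (forall i, (i < k)%nat -> 0 <= lam i /\ tsubgrad (N i) x0 (lam i * mu i) (gs i)) /\
    vsum gs k = g.
Proof.
  intros [Hg Hg0]. rewrite max_norm_x0, Rmult_1_l in Hg0.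
  destruct (max_dual_components g) as (gs & Hsum & Hdom).
  { intros x. rewrite <- Rmult_1_l. apply Hg. }
  set (lam := fun j => inner (gs j) x0).
  assert (Hball : forall j, (j < k)%nat -> forall x, mu j * N j x <= 1 -> inner (gs j) x <= lam j).
  { intros j Hj x Hx.
    (* test the joint functional on [x0] in every slot except [x] in slot [j] *)
    set (z := fun p => if Nat.eqb p j then x else x0).
    assert (Hz : rsum (fun i => inner (gs i) (z i)) k = 1 - lam j + inner (gs j) x).
    { rewrite (rsum_ext _ (fun i => inner (gs i) x0
                 + (if Nat.eqb i j then inner (gs j) x - lam j else 0))), rsum_plus, Hsum, Hg0.
      - rewrite (rsum_single _ k j Hj), Nat.eqb_refl; [ring|].
        intros i Hi Hne. destruct (Nat.eqb_spec i j); [lia|auto].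
      - intros i Hi. unfold z, lam. destruct (Nat.eqb_spec i j) as [->|]; ring. }
    assert (Hqz : qmax z <= 1).
    { apply rmax_le. intros i Hi. unfold z. destruct (Nat.eqb_spec i j) as [->|]; auto.
      right. apply hmu. lia. }
    pose proof (Hdom z) as H. rewrite Hz in H. lra. }
  exists gs, lam. split.
  - intros j Hj. destruct (hmu j Hj) as [Hm Hm1].
    assert (Hbound : forall x, inner (gs j) x <= lam j * (mu j * N j x)).
    { apply (bound_of_unit_ball (fun x => mu j * N j x)); [apply norm_scale; auto | auto]. }
    split; [|split].
    + pose proof (Hbound (vscal (-1) x0)) as H.
      rewrite (norm_opp (N j)), inner_scal_r, Hm1 in H by auto. unfold lam in *. lra.
    + intros x. rewrite Rmult_assoc. apply Hbound.
    + unfold lam at 1. rewrite Rmult_assoc, Hm1. ring.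
  - apply eq_of_inner_all. intros x. rewrite inner_vsum_l, Hsum. reflexivity.
Qed.

Lemma x0_nonzero : x0 <> vzero.
Proof.
  intros ->. destruct (hmu O ltac:(lia)) as [_ H]. rewrite norm_zero in H by (apply hN; lia). lra.
Qed.

Lemma dual_constraint_iff i tau y : (i < k)%nat ->
  (0 <= tau /\ inner y x0 = tau * Nmax x0 /\ dual_norm (N i) y <= tau * mu i) <->
  (0 <= tau /\ tsubgrad (N i) x0 (tau * mu i) y).
Proof.
  intros Hi. destruct (hmu i Hi) as [Hm Hm1].
  rewrite (dual_norm_le_iff (N i) y x0) by (auto using x0_nonzero).
  rewrite max_norm_x0, Rmult_1_r. split.
  - intros (Ht & H0 & Hd). split; [auto|split].
    + intros x. rewrite inner_sym. eapply Rle_trans; [apply Rle_abs | apply Hd].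
    + rewrite H0, Rmult_assoc, Hm1. ring.
  - intros (Ht & Hs). split; [auto|split].
    + destruct Hs as [_ H0]. rewrite H0, Rmult_assoc, Hm1. ring.
    + intros x. rewrite inner_sym. apply (tsubgrad_abs (N i) x0); auto.
Qed.

Lemma subgradient_family : exists h : nat -> V, forall i, (i < k)%nat -> tsubgrad (N i) x0 1 (h i).
Proof.
  apply (fun_choice_below vzero (fun i h => tsubgrad (N i) x0 1 h)). intros i Hi.
  apply norm_subgradient_exists; auto using x0_nonzero.
Qed.

Lemma sum_cones_in_max_cone (ys : nat -> V) :
  (forall i, (i < k)%nat -> cone (subdiff (N i) x0) (ys i)) -> cone (subdiff Nmax x0) (vsum ys k).
Proof.
  intros Hys. apply cone_subdiff_iff; [apply max_norm_poshom|].
  destruct (fun_choice_below 0 (fun i t => 0 < t /\ tsubgrad (N i) x0 t (ys i)) k) as [t Ht].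
  { intros i Hi. apply cone_subdiff_iff; [apply norm_poshom, hN|]; auto. }
  exists (rsum (fun i => t i / mu i) k). split.
  - apply rsum_pos; [lia|]. intros i Hi. apply Rdiv_lt_0_compat; [apply Ht | apply hmu]; auto.
  - apply tsubgrad_vsum. intros i Hi. apply tsubgrad_max_of_component; auto.
    + left; apply Ht; auto.
    + apply Ht; auto.
Qed.

Lemma max_cone_in_dual_param (y : V) : cone (subdiff Nmax x0) y ->
  exists (tau : nat -> R) (xs : nat -> V),
    (forall i, (i < k)%nat ->
       0 <= tau i /\ inner (xs i) x0 = tau i * Nmax x0 /\ dual_norm (N i) (xs i) <= tau i * mu i) /\
    vsum xs k = y.
Proof.
  intros Hy. apply cone_subdiff_iff in Hy as (t & Ht & Hy); [|apply max_norm_poshom].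
  assert (Hs : tsubgrad Nmax x0 1 (vscal (/ t) y)).
  { replace 1 with (/ t * t) by (field; lra). apply tsubgrad_scal; auto. left; apply Rinv_0_lt_compat; auto. }
  destruct (max_subgradient_decomp _ Hs) as (gs & lam & Hgs & Hsum).
  exists (fun i => t * lam i), (fun i => vscal t (gs i)). split.
  - intros i Hi. apply dual_constraint_iff; auto. destruct (Hgs i Hi) as [Hl Hg]. split; [nra|].
    replace (t * lam i * mu i) with (t * (lam i * mu i)) by ring. apply tsubgrad_scal; auto. lra.
  - rewrite vsum_scal, Hsum. veq. lra.
Qed.

(* Every point of the dual parametrisation is approximated by sums from the cones
   [cone ∂N_i(x0)]: add a small multiple of a subgradient to each component. *)
Lemma dual_param_approx (g : V) (tau : nat -> R) (xs : nat -> V) e :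
  (forall i, (i < k)%nat ->
     0 <= tau i /\ inner (xs i) x0 = tau i * Nmax x0 /\ dual_norm (N i) (xs i) <= tau i * mu i) ->
  0 < e -> exists ys : nat -> V, (forall i, (i < k)%nat -> cone (subdiff (N i) x0) (ys i)) /\
    norm2 (vsub g (vsum ys k)) <= norm2 (vsub g (vsum xs k)) + e.
Proof.
  intros Hxs He. destruct subgradient_family as [h Hh].
  destruct (norm2_perturb (vsub g (vsum xs k)) (vsum h k) e He) as (dl & Hdl & Hle).
  exists (fun i => vadd (xs i) (vscal dl (h i))). split.
  - intros i Hi. apply cone_subdiff_iff; [apply norm_poshom, hN; auto|].
    destruct (proj1 (dual_constraint_iff i (tau i) (xs i) Hi) (Hxs i Hi)) as [Ht Hx].
    exists (tau i * mu i + dl * 1). split.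
    + pose proof (hmu i Hi). nra.
    + apply tsubgrad_add; auto. apply tsubgrad_scal; auto. lra.
  - rewrite vsum_add, vsum_scal.
    replace (vsub g (vadd (vsum xs k) (vscal dl (vsum h k))))
      with (vsub (vsub g (vsum xs k)) (vscal dl (vsum h k))) by veq. exact Hle.
Qed.

End MaxNorm.

Theorem mainTheorem9 (V : IPS) (k : nat) (N : nat -> V -> R) (x0 : V)
  (hk : (1 <= k)%nat)
  (hN : forall i, (i < k)%nat -> is_norm (N i))
  (hx0 : x0 <> vzero) (g : V) :
  let mu := fun i => 1 / N i x0 in
  let Nmax := max_norm k mu N in
  Rinf (fun r => exists y, cone (subdiff Nmax x0) y /\ r = norm2 (vsub g y))
  = Rinf (fun r => exists ys : nat -> V,
            (forall i, (i < k)%nat -> cone (subdiff (N i) x0) (ys i)) /\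
            r = norm2 (vsub g (vsum ys k)))
  /\
  Rinf (fun r => exists ys : nat -> V,
            (forall i, (i < k)%nat -> cone (subdiff (N i) x0) (ys i)) /\
            r = norm2 (vsub g (vsum ys k)))
  = Rinf (fun r => exists (tau : nat -> R) (xs : nat -> V),
            (forall i, (i < k)%nat ->
               0 <= tau i /\
               inner (xs i) x0 = tau i * Nmax x0 /\
               dual_norm (N i) (xs i) <= tau i * mu i) /\
            r = norm2 (vsub g (vsum xs k))).
Proof.
  intros mu Nmax.
  assert (hmu : forall i, (i < k)%nat -> 0 < mu i /\ mu i * N i x0 = 1).
  { intros i Hi. pose proof (norm_pos (N i) x0 (hN i Hi) hx0). unfold mu.
    split; [apply Rdiv_lt_0_compat; lra | field; lra]. }
  apply Rinf_sandwich.
  - destruct (subgradient_family k N mu x0 hk hN hmu) as [h Hh].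
    exists (norm2 (vsub g (vsum h k))), h. split; auto. intros i Hi.
    apply cone_subdiff_iff; [apply norm_poshom; auto | exists 1; split; [lra | auto]].
  - intros r (tau & xs & _ & ->). apply sqrt_pos.
  - intros r (ys & Hys & ->). exists (vsum ys k). split; auto.
    apply (sum_cones_in_max_cone k N mu x0 hk hN hmu); auto.
  - intros r (y & Hy & ->).
    destruct (max_cone_in_dual_param k N mu x0 hk hN hmu y Hy) as (tau & xs & Hxs & <-).
    exists tau, xs. auto.
  - intros r (tau & xs & Hxs & ->). apply Rle_plus_epsilon. intros e He.
    destruct (dual_param_approx k N mu x0 hk hN hmu g tau xs e Hxs He) as (ys & Hys & Hle).
    eapply Rle_trans; [|exact Hle]. apply Rinf_le; [intros s (ys' & _ & ->); apply sqrt_pos|].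
    exists ys. auto.
Qed.
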